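(* The set $\mathrm{Ord}$ is not reduced to a point. More precisely: (i) for all $\alpha,\beta\in\mathrm{Ord}$, $\beta\le\alpha$ and $\alpha<\beta$ cannot both hold; (ii) for $m,n\in\mathbb N$, $m<n$ iff $\underline m<\underline n$, so the map $n\mapsto\underline n:\mathbb N\to\mathrm{Ord}$ is injective; (iii) for all $\alpha\in\mathrm{Ord}$ and $n>m$ in $\mathbb N$, it is impossible that $\mathrm{succ}^{(n)}(\alpha)=_{\mathrm{Ord}}\mathrm{succ}^{(m)}(\alpha)$.
   Context: Work constructively. Let $\mathfrak F$ be a set of index sets containing $\mathbb N$ and each $\mathbb N_k=\{n\in\mathbb N:n<k\}$ ($k\ge0$), closed (up to isomorphism) under finitely enumerated subsets, sets of finitely enumerated subsets, and disjoint unions indexed by elements of $\mathfrak F$. A finitely enumerated subset of $A$ is one given by a map $\mathbb N_k\to A$; write $F\subseteq_f I$. The set $\mathrm{ord}$ is inductively generated by $\underline 0$ and, for every family $(\alpha_i)_{i\in I}$ with $I\in\mathfrak F$, $\alpha_i\in\mathrm{ord}$, an element $\mathrm S(\alpha_i)_{i\in I}$; for such $\alpha$, $I_\alpha=I$ and $\alpha_i$ are its definitional subordinals; $I_{\underline 0}=\emptyset$. $\mathrm{succ}(\alpha)$ is $\mathrm S$ of the one-element family $(\alpha)$; $\mathrm{succ}^{(n)}$ is its $n$-fold iterate; $\underline{m+1}=\mathrm{succ}(\underline m)$. For a finite list $F$ in $I_\alpha$, $\alpha_F$ is the list of the $\alpha_i$, $i\in F$. Relations between an element and a nonempty finite list,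 by simultaneous induction: $\alpha\le\beta^1,\dots,\beta^m$ means $\alpha_i<\beta^1,\dots,\beta^m$ for all $i\in I_\alpha$; $\alpha<\beta^1,\dots,\beta^m$ means there exist $F_1\subseteq_f I_{\beta^1},\dots,F_m\subseteq_f I_{\beta^m}$, not all empty, with $\alpha\le\beta^1_{F_1},\dots,\beta^m_{F_m}$ (concatenated list); $\alpha\le\beta$, $\alpha<\beta$ are the case $m=1$. $\alpha=_{\mathrm{Ord}}\beta$ means $\alpha\le\beta$ and $\beta\le\alpha$; this is an equivalence relation compatible with $\le,<,\mathrm{succ}$, and $\mathrm{Ord}$ is the quotient with the induced relations and map. *)

From mathcomp Require Import ssreflect ssrfun ssrbool eqtype ssrnat seq fintype.
Set Implicit Arguments. Unset Strict Implicit. Unset Printing Implicit Defensive.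

Record iso (A B : Type) := Iso {
  iso_to : A -> B; iso_from : B -> A;
  iso_tf : forall a, iso_from (iso_to a) = a;
  iso_ft : forall b, iso_to (iso_from b) = b }.

(* The class \mathfrak F of index sets: codes [idx] decoded by [El],
   containing N and every N_k, closed (up to iso) under finitely enumerated
   subsets, the set of finitely enumerated subsets, and dependent sums. *)
Record Frak := {
  idx : Type;
  El : idx -> Type;
  cN : idx;
  isoN : iso (El cN) nat;
  cNk : nat -> idx;
  isoNk : forall k, iso (El (cNk k)) 'I_k;
  cSub : forall i k, ('I_k -> El i) -> idx;
  isoSub : forall i k (f : 'I_k -> El i),
      iso (El (cSub f)) {x : El i | exists j, f j = x};
  cFin : idx -> idx;
  isoFin : forall i, iso (El (cFin i)) {k : nat & 'I_k -> El i};
  cSigma : forall i, (El i -> idx) -> idx;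
  isoSigma : forall i (g : El i -> idx), iso (El (cSigma g)) {x : El i & El (g x)}
}.

Section Ord.
Variable F : Frak.

Inductive ord : Type :=
| zero : ord
| Sup (i : @idx F) (a : @El F i -> ord) : ord.

(* I_alpha and the definitional subordinals alpha_i *)
Definition Iidx (a : ord) : Type :=
  match a with zero => Empty_set | Sup i _ => @El F i end.
Definition sub (a : ord) : Iidx a -> ord :=
  match a return Iidx a -> ord with
  | zero => fun e => match e with end
  | Sup _ f => f
  end.

(* pick [b^1;...;b^m] g  <->  g = b^1_{F_1} ++ ... ++ b^m_{F_m} for some finite
   lists F_k of indices in I_{b^k} *)
Inductive pick : seq ord -> seq ord -> Prop :=
| pick_nil : pick [::] [::]
| pick_cons (b : ord) (bs gs : seq ord) (Fk : seq (Iidx b)) :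
    pick bs gs -> pick (b :: bs) (map (@sub b) Fk ++ gs).

(* alpha <= bs : every alpha_i < bs ;  alpha < bs : alpha <= b^1_{F_1},...,b^m_{F_m}
   with not all F_k empty (i.e. the concatenated list is nonempty). *)
Fixpoint ordle (a : ord) (bs : seq ord) {struct a} : Prop :=
  match a with
  | zero => True
  | Sup _ f => forall x, exists gs, [/\ pick bs gs, gs <> [::] & ordle (f x) gs]
  end.
Definition ordlt (a : ord) (bs : seq ord) : Prop :=
  exists gs, [/\ pick bs gs, gs <> [::] & ordle a gs].

Definition le1 (a b : ord) := ordle a [:: b].
Definition lt1 (a b : ord) := ordlt a [:: b].
Definition eqOrd (a b : ord) := le1 a b /\ le1 b a.

Definition succ (a : ord) : ord := @Sup (@cNk F 1) (fun _ => a).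
Definition succ_iter (n : nat) (a : ord) : ord := iter n succ a.
Definition num (n : nat) : ord := iter n succ zero.

End Ord.

(* Since [<=] is monotone under list inclusion, [a < K] just says [a <= L] for
   some nonempty list [L] of definitional subordinals of members of [K].  This
   "descends" relation on lists is well founded (a multiset extension of the
   well-founded subordinal relation), so no list [C] is bounded pointwise by a
   list descending from it; for [C = [:: a]] this is [~ a < a].  Transitivity
   of [<=] turns [b <= a < b] into [a < a], and (ii), (iii) follow because
   [succ^m a < succ^n a] whenever [m < n]. *)
From mathcomp Require Import ssreflect ssrfun ssrbool eqtype ssrnat seq fintype.
From Stdlib Require List.
Set Implicit Arguments. Unset Strict Implicit.

Lemma In_cat T (x : T) s1 s2 : List.In x (s1 ++ s2) <-> List.In x s1 \/ List.In x s2.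
Proof. exact: List.in_app_iff. Qed.

Lemma incl_nonnil T (s1 s2 : seq T) : List.incl s1 s2 -> s1 <> [::] -> s2 <> [::].
Proof. by case: s1 => // x s1 /(_ x (or_introl erefl)) s2x _ s2_nil; rewrite s2_nil in s2x. Qed.

Section OrdTheory.
Variable F : Frak.
Implicit Types (a b c d : ord F) (B C D G K L N : seq (ord F)).

Definition child c d := exists x : Iidx c, sub x = d.

Definition children C D := forall d, List.In d D -> exists2 c, List.In c C & child c d.

Definition descends D C := D <> [::] /\ children C D.

Lemma children_incl C C' D : List.incl C C' -> children C D -> children C' D.
Proof. by move=> sCC' chD d /chD [c /sCC' Cc' cd]; exists c. Qed.

Lemma children_app C D1 D2 : children C D1 -> children C D2 -> children C (D1 ++ D2).
Proof. by move=> ch1 ch2 d /In_cat [/ch1|/ch2]. Qed.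

Lemma descends_child c d : child c d -> descends [:: d] [:: c].
Proof. by move=> cd; split=> // _ [<-|[]]; exists c; first by left. Qed.

Lemma child_succ a : child (succ a) a.
Proof. by exists (iso_from (isoNk F 1) ord0). Qed.

Lemma pick_children B G : pick B G -> children B G.
Proof.
elim=> [|b bs gs Fk _ IH] d //= /In_cat [|/IH [c Bc cd]].
- by case/List.in_map_iff=> x [<- _]; exists b; [left | exists x].
- by exists c; first right.
Qed.

Lemma pick_nil_r B : pick B [::].
Proof. by elim: B => [|b B IH]; [exact: pick_nil | exact: (@pick_cons F b B [::] [::])]. Qed.

Lemma pick_add B G c (x : Iidx c) : pick B G -> List.In c B ->
  exists2 G', pick B G' & List.incl (sub x :: G) G'.
Proof.
elim=> [|b bs gs Fk pk IH] //= [bc|bs_c].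
  subst c; exists (map (@sub F b) (x :: Fk) ++ gs); first exact: pick_cons.
  by move=> y /= [<-|]; [left | right].
have [G' pkG' sG'] := IH bs_c; exists (map (@sub F b) Fk ++ G'); first exact: pick_cons.
move=> y [<-|/In_cat [Fk_y|gs_y]]; apply/In_cat; last by right; apply: sG'; right.
  by right; apply: sG'; left.
by left.
Qed.

Lemma children_pick B G : children B G -> exists2 G', pick B G' & List.incl G G'.
Proof.
elim: G => [|g G IH] chG; first by exists [::]; [exact: pick_nil_r | exact: List.incl_nil_l].
have [|G1 pk1 sG1] := IH; first by move=> d Gd; apply: chG; right.
have [c Bc [x <-]] := chG g (or_introl erefl).
have [G2 pk2 sG2] := pick_add x pk1 Bc.
by exists G2 => // y [<-|Gy]; apply: sG2; [left | right; apply: sG1].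
Qed.

Lemma ordle_incl a K K' : ordle a K -> List.incl K K' -> ordle a K'.
Proof.
elim: a K K' => [//|i f IH] K K' le_aK sKK' x.
have [gs [pk gs_ne le_gs]] := le_aK x.
have [gs' pk' sgs'] := children_pick (children_incl sKK' (pick_children pk)).
by exists gs'; split; [| exact: incl_nonnil sgs' gs_ne | exact: IH le_gs sgs'].
Qed.

Lemma ordleE a K : ordle a K <-> forall x : Iidx a, ordlt (sub x) K.
Proof. by case: a => [|i f] //=; split=> // _ []. Qed.

Lemma ordltP a K : ordlt a K <-> exists2 L, descends L K & ordle a L.
Proof.
split=> [[G [pk G_ne le_aG]] | [L [L_ne chL] le_aL]].
  by exists G => //; split=> //; exact: pick_children.
have [G pk sG] := children_pick chL.
by exists G; split; [| exact: incl_nonnil sG L_ne | exact: ordle_incl le_aL sG].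
Qed.

Lemma ordlt_collect C L : L <> [::] -> (forall l, List.In l L -> ordlt l C) ->
  exists2 N, descends N C & forall l, List.In l L -> ordle l N.
Proof.
elim: L => [//|l L IH] _ ltLC.
have [M [M_ne chM] le_lM] := (ordltP _ _).1 (ltLC l (or_introl erefl)).
case: L IH ltLC => [|l' L] IH ltLC; first by exists M => // _ [<-|[]].
have [//|k Lk|N [N_ne chN] le_LN] := IH; first by apply: ltLC; right.
exists (M ++ N); first by split; [case: M M_ne {chM le_lM} | exact: children_app].
move=> k [<-|Lk]; first exact: ordle_incl le_lM (List.incl_appl _ (List.incl_refl M)).
exact: ordle_incl (le_LN k Lk) (List.incl_appr _ (List.incl_refl N)).
Qed.

Lemma descends_bounded B C L : descends L B -> (forall b, List.In b B -> ordle b C) ->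
  exists2 N, descends N C & forall l, List.In l L -> ordle l N.
Proof.
move=> [L_ne chL] le_BC; apply: ordlt_collect => // l /chL [b Bb [x <-]].
exact: (ordleE _ _).1 (le_BC b Bb) x.
Qed.

Lemma ordle_trans a B C : ordle a B -> (forall b, List.In b B -> ordle b C) -> ordle a C.
Proof.
elim: a B C => [//|i f IH] B C le_aB le_BC; apply/ordleE => x.
have [L dL le_xL] := (ordltP _ _).1 ((ordleE _ _).1 le_aB x).
have [N dN le_LN] := descends_bounded dL le_BC.
by apply/ordltP; exists N => //; exact: IH le_xL le_LN.
Qed.

Lemma ordlt_le_trans a B C : ordlt a B -> (forall b, List.In b B -> ordle b C) -> ordlt a C.
Proof.
case/ordltP=> L dL le_aL le_BC; have [N dN le_LN] := descends_bounded dL le_BC.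
by apply/ordltP; exists N => //; exact: ordle_trans le_aL le_LN.
Qed.

Lemma ordle_refl a : ordle a [:: a].
Proof.
elim: a => [//|i f IH]; apply/ordleE => x; apply/ordltP.
by exists [:: f x]; [apply: descends_child; exists x | exact: IH].
Qed.

Lemma child_ordle c d : child c d -> ordle d [:: c].
Proof.
elim: d c => [//|i f IH] c cd; apply/ordleE => x; apply/ordltP.
by exists [:: Sup f]; [exact: descends_child | apply: IH; exists x].
Qed.

Lemma ordle_iter_succ k a : ordle a [:: iter k (@succ F) a].
Proof.
elim: k => [|k IH]; first exact: ordle_refl.
by apply: ordle_trans IH _ => _ [<-|[]]; exact/child_ordle/child_succ.
Qed.

Lemma Acc_descends_nil : Acc descends [::].
Proof.
constructor=> -[|d D] [D_ne chD]; first by [].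
by have [c []] := chD d (or_introl erefl).
Qed.

Lemma Acc_descends_incl C C' : Acc descends C' -> List.incl C C' -> Acc descends C.
Proof.
move=> accC' sCC'; constructor=> D [D_ne chD].
exact: Acc_inv accC' _ (conj D_ne (children_incl sCC' chD)).
Qed.

Lemma Acc_descends_children C D : Acc descends C -> children C D -> Acc descends D.
Proof.
case: D => [|d D] accC chD; first exact: Acc_descends_nil.
by apply: Acc_inv accC _ _; split.
Qed.

Lemma children_app_split C1 C2 D : children (C1 ++ C2) D ->
  exists D1 D2, [/\ children C1 D1, children C2 D2 & List.incl D (D1 ++ D2)].
Proof.
elim: D => [|d D IH] chD.
  by exists [::], [::]; split=> //; exact: List.incl_nil_l.
have [|D1 [D2 [ch1 ch2 sD]]] := IH; first by move=> e De; apply: chD; right.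
have [c /In_cat [C1c|C2c] cd] := chD d (or_introl erefl).
- exists (d :: D1), D2; split=> //; first by move=> e [<-|/ch1] //; exists c.
  by move=> e [<-|/sD]; [left | right].
- exists D1, (d :: D2); split=> //; first by move=> e [<-|/ch2] //; exists c.
  move=> e; rewrite In_cat /= => -[<-|/sD]; first by right; left.
  by rewrite In_cat => -[|]; [left | right; right].
Qed.

Lemma Acc_descends_app C1 : Acc descends C1 ->
  forall C2, Acc descends C2 -> Acc descends (C1 ++ C2).
Proof.
elim=> {}C1 _ IH1 C2 acc2; constructor=> D [_ /children_app_split [D1 [D2 [ch1 ch2 sD]]]].
apply: Acc_descends_incl sD; have acc2' := Acc_descends_children acc2 ch2.
case: D1 ch1 => [|d D1] ch1; first exact: acc2'.
by apply: (IH1 _ _ D2 acc2'); split.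
Qed.

Lemma Acc_descends_single a : Acc descends [:: a].
Proof.
elim: a => [|i f IH]; constructor=> D [D_ne chD].
  case: D D_ne chD => [/(_ erefl) [] | d D _ /(_ d (or_introl erefl)) [c [<-|[]] [[]]]].
elim: D {D_ne} chD => [|d D IHD] chD; first exact: Acc_descends_nil.
apply: (@Acc_descends_app [:: d]); last by apply: IHD => e De; apply: chD; right.
have [c [<-|[]] [x <-]] := chD d (or_introl erefl); exact: IH.
Qed.

Lemma descends_wf : well_founded descends.
Proof.
elim=> [|c C IH]; first exact: Acc_descends_nil.
exact: Acc_descends_app (Acc_descends_single c) C IH.
Qed.

Lemma descends_unbounded C D : descends D C -> ~ (forall c, List.In c C -> ordle c D).
Proof.
elim/(well_founded_ind descends_wf): C D => C IH D dD le_CD.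
have [N dN le_DN] := descends_bounded dD le_CD.
exact: IH dD N dN le_DN.
Qed.

Lemma ordlt_irrefl a : ~ ordlt a [:: a].
Proof. by case/ordltP=> L dL le_aL; apply: descends_unbounded dL _ => _ [<-|[]]. Qed.

Lemma le1_lt1_asym a b : ~ (le1 b a /\ lt1 a b).
Proof.
case=> le_ba lt_ab; have lt_aa : ordlt a [:: a].
  by apply: ordlt_le_trans lt_ab _ => _ [<-|[]].
exact: ordlt_irrefl lt_aa.
Qed.

Lemma le1_succ_iter a m n : m <= n -> le1 (succ_iter m a) (succ_iter n a).
Proof. by move=> le_mn; rewrite /le1 /succ_iter -(subnK le_mn) iterD; exact: ordle_iter_succ. Qed.

Lemma lt1_succ_iter a m n : m < n -> lt1 (succ_iter m a) (succ_iter n a).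
Proof.
case: n => [//|n] lt_mn; apply/ordltP; exists [:: succ_iter n a].
  exact/descends_child/child_succ.
exact: le1_succ_iter.
Qed.

End OrdTheory.

Theorem theorem4p9 (F : Frak) :
  (exists a b : ord F, ~ eqOrd a b) /\
  (forall a b : ord F, ~ (le1 b a /\ lt1 a b)) /\
  (forall m n : nat, (m < n) <-> lt1 (num F m) (num F n)) /\
  (forall m n : nat, eqOrd (num F m) (num F n) -> m = n) /\
  (forall (a : ord F) (m n : nat), m < n -> ~ eqOrd (succ_iter n a) (succ_iter m a)).
Proof.
have num_inj m n : eqOrd (num F m) (num F n) -> m = n.
  case=> le_mn le_nm; case: (ltngtP m n) => // lt.
  - by case: (le1_lt1_asym (conj le_nm (lt1_succ_iter (zero F) lt))).
  - by case: (le1_lt1_asym (conj le_mn (lt1_succ_iter (zero F) lt))).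
split; first by exists (num F 0), (num F 1) => /num_inj.
split; first exact: le1_lt1_asym.
split.
  move=> m n; split; first exact: lt1_succ_iter.
  move=> lt_mn; case: (leqP n m) => // le_nm.
  by case: (le1_lt1_asym (conj (le1_succ_iter (zero F) le_nm) lt_mn)).
split; first exact: num_inj.
by move=> a m n lt_mn [le_nm _]; exact: le1_lt1_asym (conj le_nm (lt1_succ_iter a lt_mn)).
Qed.
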